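(* Let $\zeta_5$ be a primitive $5$-th root of unity. (1) $\{\operatorname{Tr}(M) : M\in G_q(\zeta_5)\}=\left\{0,\ \tfrac{\sqrt5-1}{2}c,\ c,\ \tfrac{\sqrt5+1}{2}c,\ 2c : c=\pm\zeta_5^j,\ j=0,1,2,3,4\right\}$. (2) For $M_q\in G_q$, let $f(q)=\operatorname{Tr} M_q\in\mathbb{Z}[q,q^{-1}]$. Then the following are equivalent: $f(1)$ is a multiple of $5$; $f(\zeta_5)=0$; $f(q)$ is divisible by $[5]_q=q^4+q^3+q^2+q+1$.
   Context: Let $q$ be a formal parameter and let $R_q=\begin{pmatrix} q & 1\\ 0 & 1\end{pmatrix}$, $S_q=\begin{pmatrix} 0 & -q^{-1}\\ 1 & 0\end{pmatrix}\in \mathrm{GL}(2,\mathbb{Z}[q,q^{-1}])$. Let $G_q=\langle R_q,S_q\rangle$ be the group they generate. For $\zeta\in\mathbb{C}^*$, set $G_q(\zeta)=\{M_q|_{q=\zeta} : M_q\in G_q\}\subset \mathrm{GL}(2,\mathbb{C})$. *)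

From HB Require Import structures.
From mathcomp Require Import all_boot all_order all_algebra.
Set Implicit Arguments. Unset Strict Implicit. Unset Printing Implicit Defensive.
Import Order.TTheory GRing.Theory Num.Theory.
Local Open Scope ring_scope.

Definition mx2 (T : Type) (a b c d : T) : 'M[T]_2 :=
  \matrix_(i < 2, j < 2)
    if i == ord0 then (if j == ord0 then a else b) else (if j == ord0 then c else d).

(* Generators of G_q and their inverses; elements of G_q = finite words in these. *)
Inductive gen := gR | gS | gRi | gSi.

Definition Rmx (A : comUnitRingType) (z : A) : 'M[A]_2 := mx2 z 1 0 1.
Definition Smx (A : comUnitRingType) (z : A) : 'M[A]_2 := mx2 0 (- z^-1) 1 0.

Definition gen_mx (A : comUnitRingType) (z : A) (g : gen) : 'M[A]_2 :=
  match g with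
  | gR => Rmx z | gS => Smx z
  | gRi => invmx (Rmx z) | gSi => invmx (Smx z)
  end.

Definition word_mx (A : comUnitRingType) (z : A) (w : seq gen) : 'M[A]_2 :=
  foldr (fun g M => gen_mx z g *m M) 1%:M w.

Definition Gq_at (A : comUnitRingType) (z : A) (M : 'M[A]_2) : Prop :=
  exists w : seq gen, M = word_mx z w.

(* A pair (p, k) represents q^{-k} p(q), with p in Z[q]. *)
Definition laurent := ({poly int} * nat)%type.

(* equality in Z[q,q^-1]: q^{-k} p = q^{-k'} p'  iff  p q^{k'} = p' q^k *)
Definition leqL (f g : laurent) : Prop := f.1 * 'X^(g.2) = g.1 * 'X^(f.2).
Definition lmul (f g : laurent) : laurent := (f.1 * g.1, (f.2 + g.2)%N).
Definition lev (A : comUnitRingType) (x : A) (f : laurent) : A :=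
  (map_poly (fun n : int => n%:~R) f.1).[x] * x ^- f.2.
Definition qint5 : laurent := ('X^4 + 'X^3 + 'X^2 + 'X + 1, 0%N).

(* Matrices over Z[q,q^-1]: a pair (P, k) represents q^{-k} P with P over Z[q]. *)
Definition lgen (g : gen) : 'M[{poly int}]_2 * nat :=
  match g with
  | gR  => (mx2 'X 1 0 1, 0%N)
  | gS  => (mx2 0 (-1) 'X 0, 1%N)
  | gRi => (mx2 1 (-1) 0 'X, 1%N)
  | gSi => (mx2 0 1 (- 'X) 0, 0%N)
  end.

Definition lword (w : seq gen) : 'M[{poly int}]_2 * nat :=
  foldr (fun g M => ((lgen g).1 *m M.1, ((lgen g).2 + M.2)%N)) (1%:M, 0%N) w.

Definition ltrace (w : seq gen) : laurent := (\tr (lword w).1, (lword w).2).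

From HB Require Import structures.
From mathcomp Require Import all_boot all_order all_algebra.
From mathcomp Require Import ring.
Set Implicit Arguments. Unset Strict Implicit. Unset Printing Implicit Defensive.
Import Order.TTheory GRing.Theory Num.Theory.
Local Open Scope ring_scope.

(* Specialising q to zeta reduces G_q modulo Phi5 = [5]_q to a group of 2x2 matrices
   over Z[zeta] = Z[q]/(Phi5), written in the basis 1, zeta, zeta^2, zeta^3.  This group
   is finite, of order 600: a breadth-first search from the generators finds it, and a
   check that it is closed under the generators certifies it.  Part (1) compares its
   traces with the set of the statement, for each of the two signs in
   sqrt 5 = +-(1 + 2 (zeta + zeta^4)); every nonzero trace is a nonzero coefficient
   times a unit.
   For part (2), the trace f of M_q is congruent to q^k t modulo Phi5, where t is the
   trace of the image of M_q.  Hence f(zeta) = 0 iff t = 0 iff Phi5 divides f, and, as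
   Phi5(1) = 5, f(1) = t(1) mod 5; the enumeration shows that t(1) is prime to 5
   whenever t is a nonzero trace. *)

Lemma eq_mx2 (T : Type) (a b c d : T) (M : 'M[T]_2) :
  M ord0 ord0 = a -> M ord0 1 = b -> M 1 ord0 = c -> M 1 1 = d -> M = mx2 a b c d.
Proof.
move=> <- <- <- <-; apply/matrixP => i j; rewrite mxE.
by case: i => [[|[|//]] ?]; case: j => [[|[|//]] ?]; congr (M _ _); apply: val_inj.
Qed.

Lemma map_mx2 (R S : Type) (f : R -> S) (a b c d : R) :
  map_mx f (mx2 a b c d) = mx2 (f a) (f b) (f c) (f d).
Proof. by apply: eq_mx2; rewrite !mxE. Qed.

Section Mx2.
Variable R : pzRingType.
Implicit Types a b c d : R.

Lemma mx2_1 : (1%:M : 'M[R]_2) = mx2 1 0 0 1.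
Proof. by apply: eq_mx2; rewrite !mxE. Qed.

Lemma addmx2 a b c d a' b' c' d' :
  mx2 a b c d + mx2 a' b' c' d' = mx2 (a + a') (b + b') (c + c') (d + d').
Proof. by apply: eq_mx2; rewrite !mxE. Qed.

Lemma scalemx2 k a b c d : k *: mx2 a b c d = mx2 (k * a) (k * b) (k * c) (k * d).
Proof. by apply: eq_mx2; rewrite !mxE. Qed.

Lemma mulmx2 a b c d a' b' c' d' :
  mx2 a b c d *m mx2 a' b' c' d' =
  mx2 (a * a' + b * c') (a * b' + b * d') (c * a' + d * c') (c * b' + d * d').
Proof. by apply: eq_mx2; rewrite !mxE !big_ord_recl big_ord0 !mxE /= addr0. Qed.

Lemma mxtrace2 a b c d : \tr (mx2 a b c d) = a + d.
Proof. by rewrite /mxtrace !big_ord_recl big_ord0 !mxE /= addr0. Qed.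

End Mx2.

Lemma invmx_eq (R : comUnitRingType) n (A B : 'M[R]_n) : A *m B = 1%:M -> invmx A = B.
Proof.
move=> AB; have [A_unit _] := mulmx1_unit AB.
by rewrite -[invmx A]mulmx1 -AB mulmxA mulVmx // mul1mx.
Qed.

Section LaurentEval.
Variables (A : comUnitRingType) (x : A).

Definition ev : {rmorphism {poly int} -> A} := horner_eval x \o map_poly intr.

Lemma levE f : lev x f = ev f.1 * x ^- f.2. Proof. by []. Qed.

Lemma evX : ev 'X = x.
Proof. by rewrite /ev /= map_polyX horner_evalE hornerX. Qed.

Hypothesis x_unit : x \is a GRing.unit.

Lemma lev_lmul f g : lev x (lmul f g) = lev x f * lev x g.
Proof. by rewrite !levE rmorphM exprD invrM ?unitrX //; ring. Qed.

Lemma lev_leqL f g : leqL f g -> lev x f = lev x g.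
Proof.
move=> /(congr1 ev); rewrite !rmorphM !rmorphXn evX => fg.
have xn_unit n : x ^+ n \is a GRing.unit by rewrite unitrX.
by rewrite !levE -[ev f.1](mulrK (xn_unit g.2)) fg mulrAC mulrK.
Qed.

Lemma gen_mx_lgen g : gen_mx x g = x ^- (lgen g).2 *: map_mx ev (lgen g).1.
Proof.
have xVx : x^-1 * x = 1 by rewrite mulVr.
case: g => /=; rewrite map_mx2 !(rmorph0, rmorph1, rmorphN, evX) ?expr0 ?expr1 ?invr1 ?scale1r //.
- by rewrite scalemx2 !(mulr0, mulrN1) xVx.
- apply: invmx_eq; rewrite scalemx2 mulmx2 mx2_1.
  by rewrite !(mulr0, mulr1, mul1r, mulrN1, mul0r, addr0, add0r) mulrN divrr // xVx addNr.
- apply: invmx_eq; rewrite mulmx2 mx2_1 !(mulr0, mulr1, mul1r, mulrN1, mul0r, addr0, add0r).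
  by rewrite mulrN mulNr opprK mulVr.
Qed.

Lemma word_mx_lword w : word_mx x w = x ^- (lword w).2 *: map_mx ev (lword w).1.
Proof.
elim: w => [|g w IHw] /=; first by rewrite map_mx1 expr0 invr1 scale1r.
rewrite gen_mx_lgen IHw map_mxM -scalemxAl -scalemxAr scalerA.
by rewrite -invrM ?unitrX // -exprD addnC.
Qed.

Lemma mxtrace_word_mx w : \tr (word_mx x w) = lev x (ltrace w).
Proof. by rewrite word_mx_lword mxtraceZ trace_map_mx levE mulrC. Qed.

End LaurentEval.

Section Congruence.
Variables (R : comPzRingType) (m : R).

Definition eqmod (p q : R) := exists r, p = q + m * r.
Definition eqmodmx n (P Q : 'M[R]_n) := exists X, P = Q + m *: X.

Lemma eqmodD p p' q q' : eqmod p q -> eqmod p' q' -> eqmod (p + p') (q + q').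
Proof. by move=> [r ->] [r' ->]; exists (r + r'); ring. Qed.

Lemma eqmodmx_trans n (P Q S : 'M_n) : eqmodmx P Q -> eqmodmx Q S -> eqmodmx P S.
Proof. by move=> [X ->] [Y ->]; exists (Y + X); rewrite scalerDr addrA. Qed.

Lemma eqmodmxZ n a (P Q : 'M_n) : eqmodmx P Q -> eqmodmx (a *: P) (a *: Q).
Proof. by move=> [X ->]; exists (a *: X); rewrite scalerDr !scalerA mulrC. Qed.

Lemma eqmodmxM n (P P' Q Q' : 'M_n) :
  eqmodmx P Q -> eqmodmx P' Q' -> eqmodmx (P *m P') (Q *m Q').
Proof.
move=> [X ->] [Y ->]; exists (Q *m Y + X *m Q' + m *: (X *m Y)).
by rewrite mulmxDl !mulmxDr -!scalemxAl -!scalemxAr !scalerDr scalerA !addrA.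
Qed.

Lemma eqmodmx2 a b c d a' b' c' d' :
  eqmod a a' -> eqmod b b' -> eqmod c c' -> eqmod d d' ->
  eqmodmx (mx2 a b c d) (mx2 a' b' c' d').
Proof.
by move=> [ra ->] [rb ->] [rc ->] [rd ->]; exists (mx2 ra rb rc rd); rewrite scalemx2 addmx2.
Qed.

Lemma eqmod_mxtrace n (P Q : 'M_n) : eqmodmx P Q -> eqmod (\tr P) (\tr Q).
Proof. by move=> [X ->]; exists (\tr X); rewrite mxtraceD mxtraceZ. Qed.

End Congruence.

Lemma eqmod_ev (A : comUnitRingType) (x : A) (m p q : {poly int}) :
  eqmod m p q -> exists r, ev x p = ev x q + ev x m * r.
Proof. by move=> [r ->]; exists (ev x r); rewrite rmorphD rmorphM. Qed.

(* (a0, a1, a2, a3) stands for a0 + a1 zeta + a2 zeta^2 + a3 zeta^3, and the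
   product is reduced with zeta^5 = 1 and zeta^4 = - 1 - zeta - zeta^2 - zeta^3. *)
Definition cyc5 := (int * int * int * int)%type.

Definition cyc5_add (x y : cyc5) : cyc5 :=
  let: (a0, a1, a2, a3) := x in let: (b0, b1, b2, b3) := y in
  (a0 + b0, a1 + b1, a2 + b2, a3 + b3).

Definition cyc5_mul (x y : cyc5) : cyc5 :=
  let: (a0, a1, a2, a3) := x in let: (b0, b1, b2, b3) := y in
  let d4 := a1 * b3 + a2 * b2 + a3 * b1 in
  (a0 * b0 + a2 * b3 + a3 * b2 - d4,
   a0 * b1 + a1 * b0 + a3 * b3 - d4,
   a0 * b2 + a1 * b1 + a2 * b0 - d4,
   a0 * b3 + a1 * b2 + a2 * b1 + a3 * b0 - d4).

Definition cyc5_at1 (x : cyc5) : int := let: (a0, a1, a2, a3) := x in a0 + a1 + a2 + a3.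

Definition cmx := (cyc5 * cyc5 * cyc5 * cyc5)%type.

Definition cmx_mul (M N : cmx) : cmx :=
  let: (a, b, c, d) := M in let: (a', b', c', d') := N in
  (cyc5_add (cyc5_mul a a') (cyc5_mul b c'), cyc5_add (cyc5_mul a b') (cyc5_mul b d'),
   cyc5_add (cyc5_mul c a') (cyc5_mul d c'), cyc5_add (cyc5_mul c b') (cyc5_mul d d')).

Definition cmx_tr (M : cmx) : cyc5 := let: (a, _, _, d) := M in cyc5_add a d.

Definition cmx1 : cmx := ((1, 0, 0, 0), (0, 0, 0, 0), (0, 0, 0, 0), (1, 0, 0, 0)).

(* zeta^-1 = zeta^4 = (-1, -1, -1, -1) *)
Definition gen_cmx (g : gen) : cmx :=
  match g with
  | gR => ((0, 1, 0, 0), (1, 0, 0, 0), (0, 0, 0, 0), (1, 0, 0, 0))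
  | gS => ((0, 0, 0, 0), (1, 1, 1, 1), (1, 0, 0, 0), (0, 0, 0, 0))
  | gRi => ((-1, -1, -1, -1), (1, 1, 1, 1), (0, 0, 0, 0), (1, 0, 0, 0))
  | gSi => ((0, 0, 0, 0), (1, 0, 0, 0), (0, -1, 0, 0), (0, 0, 0, 0))
  end.

Definition word_cmx (w : seq gen) : cmx := foldr (fun g M => cmx_mul (gen_cmx g) M) cmx1 w.

Definition Phi5 : {poly int} := 'X^4 + 'X^3 + 'X^2 + 'X + 1.

Definition cyc5_poly (x : cyc5) : {poly int} :=
  let: (a0, a1, a2, a3) := x in a0%:~R + a1%:~R * 'X + a2%:~R * 'X^2 + a3%:~R * 'X^3.

Definition cmx_poly (M : cmx) : 'M[{poly int}]_2 :=
  let: (a, b, c, d) := M in mx2 (cyc5_poly a) (cyc5_poly b) (cyc5_poly c) (cyc5_poly d).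

Lemma cyc5_poly_add x y : cyc5_poly (cyc5_add x y) = cyc5_poly x + cyc5_poly y.
Proof.
by case: x => [[[a0 a1] a2] a3]; case: y => [[[b0 b1] b2] b3]; rewrite /= !intrD; ring.
Qed.

Lemma cyc5_poly_mul x y :
  eqmod Phi5 (cyc5_poly x * cyc5_poly y) (cyc5_poly (cyc5_mul x y)).
Proof.
case: x => [[[a0 a1] a2] a3]; case: y => [[[b0 b1] b2] b3] /=.
exists ((a1 * b3 + a2 * b2 + a3 * b1)%:~R + (a2 * b3 + a3 * b2)%:~R * ('X - 1)
        + (a3 * b3)%:~R * 'X * ('X - 1)).
by rewrite /Phi5 !(intrD, intrB, intrM); ring.
Qed.

Lemma ev_cyc5_poly (A : comUnitRingType) (x : A) a0 a1 a2 a3 :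
  ev x (cyc5_poly (a0, a1, a2, a3)) =
  a0%:~R + a1%:~R * x + a2%:~R * x ^+ 2 + a3%:~R * x ^+ 3.
Proof. by rewrite [cyc5_poly _]/= !rmorphD !rmorphM !rmorph_int evX; ring. Qed.

Lemma ev1_cyc5_poly x : ev 1 (cyc5_poly x) = cyc5_at1 x.
Proof. by case: x => [[[a0 a1] a2] a3]; rewrite ev_cyc5_poly !expr1n !mulr1 !intz. Qed.

Lemma cmx_poly_mul M N :
  eqmodmx Phi5 (cmx_poly M *m cmx_poly N) (cmx_poly (cmx_mul M N)).
Proof.
case: M => [[[a b] c] d]; case: N => [[[a' b'] c'] d'] /=.
rewrite mulmx2; apply: eqmodmx2; rewrite cyc5_poly_add;
  by apply: eqmodD; apply: cyc5_poly_mul.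
Qed.

Lemma lgen_eqmod g : eqmodmx Phi5 (lgen g).1 ('X ^+ (lgen g).2 *: cmx_poly (gen_cmx g)).
Proof.
case: g; rewrite /= scalemx2; apply: eqmodmx2; rewrite /Phi5;
  by [exists 0; ring | exists 1; ring | exists (-1); ring].
Qed.

Lemma lword_eqmod w :
  eqmodmx Phi5 (lword w).1 ('X ^+ (lword w).2 *: cmx_poly (word_cmx w)).
Proof.
elim: w => [|g w IHw] /=.
  by exists 0; rewrite scaler0 addr0 scale1r mx2_1 /=; congr mx2; ring.
apply: eqmodmx_trans (eqmodmxM (lgen_eqmod g) IHw) _.
rewrite -scalemxAl -scalemxAr scalerA -exprD.
by apply: eqmodmxZ; apply: cmx_poly_mul.
Qed.

Lemma ltrace_eqmod w :
  eqmod Phi5 (ltrace w).1 ('X ^+ (ltrace w).2 * cyc5_poly (cmx_tr (word_cmx w))).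
Proof.
have := eqmod_mxtrace (lword_eqmod w); rewrite mxtraceZ.
by case: (word_cmx w) => [[[a b] c] d]; rewrite /= mxtrace2 cyc5_poly_add.
Qed.

(* eps records the sign in sqrtC 5 = +-(1 + 2 (zeta + zeta^4)), and coefs eps lists
   the coefficients 0, (sqrt 5 - 1) / 2, 1, (sqrt 5 + 1) / 2, 2 accordingly. *)
Definition sqrt5_cyc (eps : bool) : cyc5 := if eps then (-1, 0, -2, -2) else (1, 0, 2, 2).

Definition coefs (eps : bool) : seq cyc5 :=
  if eps then [:: (0, 0, 0, 0); (-1, 0, -1, -1); (1, 0, 0, 0); (0, 0, -1, -1); (2, 0, 0, 0)]
  else [:: (0, 0, 0, 0); (0, 0, 1, 1); (1, 0, 0, 0); (1, 0, 1, 1); (2, 0, 0, 0)].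

Lemma sqrt5_cyc_sqr eps : cyc5_mul (sqrt5_cyc eps) (sqrt5_cyc eps) = (5, 0, 0, 0).
Proof. by case: eps. Qed.

Definition unit_cyc (s : bool) (j : nat) : cyc5 :=
  cyc5_mul (if s then (-1, 0, 0, 0) else (1, 0, 0, 0))
           (iter j (cyc5_mul (0, 1, 0, 0)) (1, 0, 0, 0)).

Definition target (eps : bool) (a : nat) (s : bool) (j : nat) : cyc5 :=
  cyc5_mul (nth (0, 0, 0, 0) (coefs eps) a) (unit_cyc s j).

(* Finite quantifiers over 'I_5 do not evaluate under vm_compute, hence the lists. *)
Definition exists_params (P : nat -> bool -> nat -> bool) :=
  has (fun a => has (fun s => has (P a s) (iota 0 5)) [:: false; true]) (iota 0 5).

Definition forall_params (P : nat -> bool -> nat -> bool) :=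
  all (fun a => all (fun s => all (P a s) (iota 0 5)) [:: false; true]) (iota 0 5).

Lemma exists_paramsP P :
  exists_params P -> exists (a : 'I_5) (s : bool) (j : 'I_5), P a s j.
Proof.
case/hasP=> a; rewrite mem_iota => /andP[_ a5] /hasP[s _] /hasP[j].
by rewrite mem_iota => /andP[_ j5] Pasj; exists (Ordinal a5), s, (Ordinal j5).
Qed.

Lemma forall_paramsP P :
  forall_params P -> forall (a : 'I_5) (s : bool) (j : 'I_5), P a s j.
Proof.
have iota5 (i : 'I_5) : (i : nat) \in iota 0 5 by rewrite mem_iota ltn_ord.
move=> /allP Pa a s j; have /allP Ps := Pa a (iota5 a).
have s2 : s \in [:: false; true] by case: s.
by have /allP := Ps s s2; apply; apply: iota5.
Qed.

Definition gens := [:: gR; gS; gRi; gSi].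

Lemma all_gens (p : pred gen) : all p gens -> forall g, p g.
Proof. by case/and4P=> pR pS pRi /andP[pSi _] []. Qed.

(* Breadth-first search of the orbit of the identity, recording a word for each
   element; its output is only used through the certificates Gzeta_closed and
   Gzeta_words_correct below. *)
Fixpoint orbit n (seen frontier : seq (cmx * seq gen)) :=
  if n is n'.+1 then
    let add_new acc y := if y.1 \in map fst (acc ++ seen) then acc else y :: acc in
    let fresh := foldl add_new [::]
      [seq (cmx_mul (gen_cmx g) x.1, g :: x.2) | x <- frontier, g <- gens] in
    orbit n' (fresh ++ seen) fresh
  else seen.

Definition Gzeta_words := Eval vm_compute in orbit 10 [:: (cmx1, [::])] [:: (cmx1, [::])].
Definition Gzeta := map fst Gzeta_words.

Lemma Gzeta_closed :
  (cmx1 \in Gzeta) && all (fun M => all (fun g => cmx_mul (gen_cmx g) M \in Gzeta) gens) Gzeta.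
Proof. by vm_compute. Qed.

Lemma Gzeta_words_correct : all (fun x => word_cmx x.2 == x.1) Gzeta_words.
Proof. by vm_compute. Qed.

Lemma Gzeta_traces_in_targets eps :
  all (fun M => exists_params (fun a s j => cmx_tr M == target eps a s j)) Gzeta.
Proof. by case: eps; vm_compute. Qed.

Lemma targets_in_Gzeta_traces eps :
  forall_params (fun a s j => target eps a s j \in map cmx_tr Gzeta).
Proof. by case: eps; vm_compute. Qed.

Lemma targets_at1 eps : forall_params (fun a s j =>
  if a == 0%N then target eps a s j == (0, 0, 0, 0)
  else ~~ (5 %| cyc5_at1 (target eps a s j))%Z).
Proof. by case: eps; vm_compute. Qed.

Lemma word_cmx_Gzeta w : word_cmx w \in Gzeta.
Proof.
case/andP: Gzeta_closed => Gzeta1 /allP Gzeta_gens.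
elim: w => [|g w IHw]; first exact: Gzeta1.
exact: all_gens (Gzeta_gens _ IHw) g.
Qed.

Lemma Gzeta_word M : M \in Gzeta -> exists w, word_cmx w = M.
Proof.
rewrite /Gzeta; elim: Gzeta_words Gzeta_words_correct => // -[M' w] l IHl.
case/andP=> /eqP wM' l_correct.
by rewrite inE => /orP[/eqP -> | /(IHl l_correct)//]; exists w.
Qed.

Lemma word_trace_target eps w :
  exists (a : 'I_5) (s : bool) (j : 'I_5), cmx_tr (word_cmx w) = target eps a s j.
Proof.
have := allP (Gzeta_traces_in_targets eps) _ (word_cmx_Gzeta w).
by case/exists_paramsP=> a [s [j /eqP ->]]; exists a, s, j.
Qed.

Lemma target_word_trace eps (a : 'I_5) s (j : 'I_5) :
  exists w, cmx_tr (word_cmx w) = target eps a s j.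
Proof.
have /mapP[M /Gzeta_word[w <-] ->] := forall_paramsP (targets_in_Gzeta_traces eps) a s j.
by exists w.
Qed.

Lemma target_eq0_at1 eps (a : 'I_5) s (j : 'I_5) :
  if a == 0%N :> nat then target eps a s j = (0, 0, 0, 0)
  else ~~ (5 %| cyc5_at1 (target eps a s j))%Z.
Proof. by have := forall_paramsP (targets_at1 eps) a s j; case: eqP => // _ /eqP. Qed.

Section PrimitiveRoot5.
Variables (C : numClosedFieldType) (z : C).
Hypothesis z_prim : 5.-primitive_root z.

Local Notation coefsC := [:: 0; (sqrtC 5 - 1) / 2; 1; (sqrtC 5 + 1) / 2; (2 : C)].

Lemma prim5_neq0 : z != 0.
Proof. by rewrite (prim_root_eq0 z_prim). Qed.

Lemma prim5_unit : z \is a GRing.unit.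
Proof. by rewrite unitfE prim5_neq0. Qed.

Lemma ev_Phi5 : ev z Phi5 = 0.
Proof.
have z_neq1 : z != 1 by rewrite -[z]expr1 -(prim_order_dvd z_prim).
have : (z - 1) * ev z Phi5 = 0.
  rewrite -(subrr 1) -{2}(prim_expr_order z_prim).
  by rewrite /Phi5 !rmorphD !rmorphXn rmorph1 evX; ring.
by move/eqP; rewrite mulf_eq0 subr_eq0 (negPf z_neq1) => /eqP.
Qed.

Definition phi (x : cyc5) : C := ev z (cyc5_poly x).
Arguments phi : simpl never.

Lemma phiE a0 a1 a2 a3 :
  phi (a0, a1, a2, a3) = a0%:~R + a1%:~R * z + a2%:~R * z ^+ 2 + a3%:~R * z ^+ 3.
Proof. exact: ev_cyc5_poly. Qed.

Lemma phi_mul x y : phi (cyc5_mul x y) = phi x * phi y.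
Proof.
have [r polyM] := eqmod_ev z (cyc5_poly_mul x y).
by rewrite /phi -rmorphM polyM ev_Phi5 mul0r addr0.
Qed.

Lemma lev_ltrace w : lev z (ltrace w) = phi (cmx_tr (word_cmx w)).
Proof.
have [r trE] := eqmod_ev z (ltrace_eqmod w).
rewrite levE trE /phi ev_Phi5 mul0r addr0 rmorphM rmorphXn evX mulrAC.
by rewrite divrr ?mul1r // unitrX // prim5_unit.
Qed.

Lemma sqrtC5E : exists eps, sqrtC 5 = phi (sqrt5_cyc eps).
Proof.
have : sqrtC 5 ^+ 2 == phi (sqrt5_cyc true) ^+ 2.
  by rewrite sqrtCK expr2 -phi_mul sqrt5_cyc_sqr phiE; apply/eqP; ring.
rewrite eqf_sqr => /orP[/eqP-> | /eqP->]; [by exists true | exists false].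
by rewrite !phiE; ring.
Qed.

Lemma phi_coef eps (a : 'I_5) : sqrtC 5 = phi (sqrt5_cyc eps) ->
  phi (nth (0, 0, 0, 0) (coefs eps) a) = nth 0 coefsC a.
Proof.
have two_neq0 : (2 : C) != 0 by rewrite pnatr_eq0.
by case: eps => /= ->; case: a => [[|[|[|[|[|//]]]]] _] /=; rewrite !phiE; field.
Qed.

Lemma phi_unit_cyc s j : phi (unit_cyc s j) = (-1) ^+ s * z ^+ j.
Proof.
rewrite phi_mul; congr (_ * _); first by case: s; rewrite phiE; ring.
elim: j => [|j IHj]; first by rewrite phiE; ring.
by rewrite iterS phi_mul IHj exprS phiE; ring.
Qed.

Lemma phi_target eps (a : 'I_5) s (j : 'I_5) : sqrtC 5 = phi (sqrt5_cyc eps) ->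
  phi (target eps a s j) = nth 0 coefsC a * ((-1) ^+ s * z ^+ j).
Proof. by move=> sqrt5E; rewrite phi_mul phi_coef // phi_unit_cyc. Qed.

Lemma coefsC_neq0 (a : 'I_5) : a != 0%N :> nat -> nth 0 coefsC a != 0.
Proof.
have two_neq0 : (2 : C) != 0 by rewrite pnatr_eq0.
have sqrt5_neq (y : C) : y ^+ 2 = 1 -> sqrtC 5 != y.
  have five_neq1 : (5 : C) != 1 by rewrite pnatr_eq1.
  by move=> y2; apply: contra_neq five_neq1 => sqrt5y; rewrite -[LHS](sqrtCK 5) sqrt5y.
case: a => [[|[|[|[|[|//]]]]] _] //= _; rewrite ?oner_neq0 // mulf_neq0 ?invr_neq0 //.
  by rewrite subr_eq0 sqrt5_neq ?expr1n.
by rewrite addr_eq0 sqrt5_neq ?sqrrN ?expr1n.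
Qed.

Lemma mxtrace_Gq_at (t : C) :
  (exists M, Gq_at z M /\ t = \tr M) <->
  (exists (j : 'I_5) (s : bool) a, a \in coefsC /\ t = a * ((-1) ^+ s * z ^+ j)).
Proof.
have [eps sqrt5E] := sqrtC5E.
have trE w : \tr (word_mx z w) = phi (cmx_tr (word_cmx w)).
  by rewrite mxtrace_word_mx ?prim5_unit // lev_ltrace.
split=> [[_ [[w ->] ->]] | [j [s [a [a_in ->]]]]].
  rewrite trE; have [a [s [j ->]]] := word_trace_target eps w.
  exists j, s, (nth 0 coefsC a); split; last exact: phi_target.
  by apply: mem_nth; exact: ltn_ord.
have ia5 : (index a coefsC < 5)%N by rewrite -[5%N]/(size coefsC) index_mem.
have [w trw] := target_word_trace eps (Ordinal ia5) s j.
exists (word_mx z w); split; first by exists w.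
by rewrite trE trw phi_target //= nth_index.
Qed.

Lemma lev_Phi5_multiple f g : leqL f (lmul qint5 g) -> lev z f = 0.
Proof.
move/(lev_leqL prim5_unit) ->; rewrite lev_lmul ?prim5_unit //.
by rewrite levE ev_Phi5 !mul0r.
Qed.

Lemma ltrace_cases w :
  [/\ lev z (ltrace w) = 0, (5 %| lev 1 (ltrace w))%Z
    & exists g, leqL (ltrace w) (lmul qint5 g)]
  \/ lev z (ltrace w) != 0 /\ ~~ (5 %| lev 1 (ltrace w))%Z.
Proof.
have [eps sqrt5E] := sqrtC5E.
have [r trE] := ltrace_eqmod w.
have lev1E : lev 1 (ltrace w) = cyc5_at1 (cmx_tr (word_cmx w)) + 5 * ev 1 r.
  rewrite levE trE !rmorphD !rmorphM rmorphXn evX ev1_cyc5_poly expr1n invr1 !mulr1 mul1r.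
  by congr (_ + _ * _); rewrite /Phi5 !rmorphD !rmorphXn rmorph1 evX !expr1n.
have [a [s [j tr_target]]] := word_trace_target eps w.
have := target_eq0_at1 eps a s j; case: eqP => [a0 | /eqP a_neq0 not5].
  rewrite -tr_target => tr0; left; split.
  - by rewrite lev_ltrace tr0 phiE; ring.
  - by rewrite lev1E tr0 add0r dvdz_mulr.
  have trPhi5 : (ltrace w).1 = Phi5 * r.
    by rewrite trE tr0 [cyc5_poly _]/= !mulr0z !mul0r !addr0 mulr0 add0r.
  by exists (r, (ltrace w).2); rewrite /leqL trPhi5.
right; split; last by rewrite lev1E rpredDr ?dvdz_mulr // tr_target.
rewrite lev_ltrace tr_target phi_target // mulf_neq0 ?coefsC_neq0 //.
by rewrite mulf_neq0 ?signr_eq0 ?expf_neq0 ?prim5_neq0.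
Qed.

End PrimitiveRoot5.

Theorem corollary3p7 (C : numClosedFieldType) (z : C) (hz : 5.-primitive_root z) :
  (forall t : C,
     (exists M : 'M[C]_2, Gq_at z M /\ t = \tr M) <->
     (exists (j : 'I_5) (s : bool) (a : C),
        a \in [:: 0; (sqrtC 5 - 1) / 2; 1; (sqrtC 5 + 1) / 2; 2] /\
        t = a * ((-1) ^+ s * z ^+ j)))
  /\
  (forall w : seq gen,
     ((5 %| lev (1 : int) (ltrace w))%Z <-> lev z (ltrace w) = 0) /\
     (lev z (ltrace w) = 0 <-> exists g : laurent, leqL (ltrace w) (lmul qint5 g))).
Proof.
split=> [t | w]; first exact: mxtrace_Gq_at.
case: (ltrace_cases hz w) => [[-> dvd5 Phi5_dvd] | [/eqP lev_neq0 /negP not_dvd5]].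
  by split; split.
split; first by split=> [/not_dvd5 | /lev_neq0].
by split=> [/lev_neq0 | [g /(lev_Phi5_multiple hz)/lev_neq0]].
Qed.
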